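(* Let $a,q,\alpha,\beta,\gamma,\delta\in\mathbb{C}$ with $a\neq 0$ and $\gamma\notin\{0,-1,-2,\dots\}$, and set $\varepsilon=\alpha+\beta-\gamma-\delta+1$. Let $(d_n)_{n\ge0}$ be defined by $d_0=1$, $d_1=\frac{q}{a\gamma}$, and for $n\ge1$ $$d_{n+1}=\frac{(1+a)n^2+\big(\gamma+\varepsilon-1+a(\gamma+\delta-1)\big)n+q}{a(n+1)(n+\gamma)}\,d_n-\frac{(n-1+\alpha)(n-1+\beta)}{a(n+1)(n+\gamma)}\,d_{n-1},$$ so that $y(x)=\sum_{n\ge0}d_nx^n$ is the formal power-series solution at $x=0$ (exponent $0$) of Heun's equation $$y''+\Big(\frac{\gamma}{x}+\frac{\delta}{x-1}+\frac{\varepsilon}{x-a}\Big)y'+\frac{\alpha\beta x-q}{x(x-1)(x-a)}\,y=0.$$ Then $\sum_{n\ge0}d_nx^n$ converges absolutely for every $x\in\mathbb{C}$ satisfying $$\left|\frac{1+a}{a}\,x\right|+\left|\frac{1}{a}\,x^2\right|<1.$$ *)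

From Stdlib Require Import Reals.
Open Scope R_scope.

Definition Cx : Type := (R * R)%type.

Definition RtoC (r : R) : Cx := (r, 0).
Definition Czero : Cx := (0, 0).
Definition Cone : Cx := (1, 0).
Definition Cadd (z w : Cx) : Cx := (fst z + fst w, snd z + snd w).
Definition Copp (z : Cx) : Cx := (- fst z, - snd z).
Definition Csub (z w : Cx) : Cx := Cadd z (Copp w).
Definition Cmul (z w : Cx) : Cx :=
  (fst z * fst w - snd z * snd w, fst z * snd w + snd z * fst w).
Definition Cinv (z : Cx) : Cx :=
  (fst z / (fst z ^ 2 + snd z ^ 2), - snd z / (fst z ^ 2 + snd z ^ 2)).
Definition Cdiv (z w : Cx) : Cx := Cmul z (Cinv w).
Fixpoint Cpow (z : Cx) (n : nat) : Cx :=
  match n with O => Cone | S m => Cmul z (Cpow z m) end.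
Definition Cmod (z : Cx) : R := sqrt (fst z ^ 2 + snd z ^ 2).
Definition natC (n : nat) : Cx := RtoC (INR n).

Definition heun_eps (al be ga de : Cx) : Cx :=
  Cadd (Csub (Csub (Cadd al be) ga) de) Cone.

Definition heun_step (a q al be ga de : Cx) (n : nat) (dn dnm1 : Cx) : Cx :=
  let ep := heun_eps al be ga de in
  let nC := natC n in
  let den := Cmul a (Cmul (natC (S n)) (Cadd nC ga)) in
  let A := Cadd (Cadd (Cmul (Cadd Cone a) (Cmul nC nC))
                      (Cmul (Cadd (Csub (Cadd ga ep) Cone)
                                  (Cmul a (Csub (Cadd ga de) Cone))) nC)) q in
  let B := Cmul (Cadd (Csub nC Cone) al) (Cadd (Csub nC Cone) be) in
  Csub (Cmul (Cdiv A den) dn) (Cmul (Cdiv B den) dnm1).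

(* heun_pair n = (d_n, d_{n+1}) *)
Fixpoint heun_pair (a q al be ga de : Cx) (n : nat) : Cx * Cx :=
  match n with
  | O => (Cone, Cdiv q (Cmul a ga))
  | S m => let p := heun_pair a q al be ga de m in
           (snd p, heun_step a q al be ga de (S m) (snd p) (fst p))
  end.

Definition heun_d (a q al be ga de : Cx) (n : nat) : Cx := fst (heun_pair a q al be ga de n).

From Stdlib Require Import Reals Lra Lia Psatz.
From Coquelicot Require Import Coquelicot.
From Pilot Require Import Defs.
Open Scope R_scope.

(* The coefficients of the recurrence tend to (1+a)/a and -1/a, so for every
   eta > 0 eventually
     |d_{n+2}| <= (|(1+a)/a| + eta) |d_{n+1}| + (|1/a| + eta) |d_n|.
   With r = |x|, the terms e_n = |d_n| r^n then satisfy e_{n+2} <= c1 e_{n+1} + c2 e_n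
   where c1 + c2 = |(1+a)/a| r + |1/a| r^2 + eta (r + r^2) < 1 for eta small, and
   such a recurrence inequality bounds the partial sums of e by a geometric argument. *)

(* [Defs] models complex numbers exactly as Coquelicot does, so its operations are
   convertible to Coquelicot's; the notations below name Coquelicot's versions,
   which the [Defs] names shadow. *)
Local Notation CM := Coquelicot.Complex.Cmod.
Local Notation R2C := Coquelicot.Complex.RtoC.

Section LinearRecurrenceMajorant.

Variables (e : nat -> R) (c1 c2 : R) (N0 : nat).
Hypotheses (e_ge0 : forall n, 0 <= e n) (c1_ge0 : 0 <= c1) (c2_ge0 : 0 <= c2)
  (c_lt1 : c1 + c2 < 1).
Hypothesis e_rec : forall n, (N0 <= n)%nat -> e (S (S n)) <= c1 * e (S n) + c2 * e n.

Lemma partial_sum_le_mono m n : (m <= n)%nat -> sum_f_R0 e m <= sum_f_R0 e n.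
Proof.
  induction 1 as [|n _ IH]; [lra|].
  rewrite tech5. specialize (e_ge0 (S n)). lra.
Qed.

Lemma term_le_partial_sum n : e n <= sum_f_R0 e n.
Proof.
  destruct n as [|n]; simpl; [lra|].
  pose proof (cond_pos_sum e n e_ge0). lra.
Qed.

Lemma partial_sum_rec_le n : (N0 <= n)%nat ->
  sum_f_R0 e (S (S n)) <=
  sum_f_R0 e (S N0) + c1 * sum_f_R0 e (S n) + c2 * sum_f_R0 e n.
Proof.
  induction 1 as [|n Hn IH].
  - pose proof (e_rec N0 (le_n _)).
    pose proof (term_le_partial_sum (S N0)). pose proof (term_le_partial_sum N0).
    rewrite (tech5 e (S N0)). nra.
  - pose proof (e_rec (S n) (le_S _ _ Hn)).
    rewrite (tech5 e (S (S n))), (tech5 e (S n)), (tech5 e n) in *. lra.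
Qed.

Lemma partial_sum_le_bound n : sum_f_R0 e n <= sum_f_R0 e (S N0) / (1 - (c1 + c2)).
Proof.
  set (k := (N0 + n)%nat).
  pose proof (partial_sum_rec_le k (Nat.le_add_r N0 n)).
  pose proof (partial_sum_le_mono (S k) (S (S k)) ltac:(lia)).
  pose proof (partial_sum_le_mono k (S (S k)) ltac:(lia)).
  pose proof (partial_sum_le_mono n (S (S k)) ltac:(lia)).
  apply Rle_div_r; nra.
Qed.

Lemma series_cv_of_linear_recurrence_le : exists l, Un_cv (sum_f_R0 e) l.
Proof.
  destruct (growing_cv (sum_f_R0 e)) as [l Hl].
  - intro n. apply partial_sum_le_mono. lia.
  - exists (sum_f_R0 e (S N0) / (1 - (c1 + c2))).
    intros y [n ->]. apply partial_sum_le_bound.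
  - now exists l.
Qed.

End LinearRecurrenceMajorant.

Lemma quadratic_bound_slack p s r : 0 <= r -> p * r + s * r ^ 2 < 1 ->
  exists eta, 0 < eta /\ (p + eta) * r + (s + eta) * r ^ 2 < 1.
Proof.
  intros Hr Hlt.
  assert (Hr2 : 0 <= r ^ 2) by now apply pow_le.
  exists ((1 - (p * r + s * r ^ 2)) / (2 * (1 + r + r ^ 2))).
  split; [apply Rdiv_lt_0_compat; lra|].
  apply Rminus_lt_0. field_simplify; [|lra]. apply Rdiv_lt_0_compat; nra.
Qed.

Lemma natC_S n : natC (S n) = (natC n + 1)%C.
Proof. unfold natC. now rewrite S_INR, RtoC_plus. Qed.

Lemma Cmod_natC n : CM (natC n) = INR n.
Proof. unfold natC. rewrite Cmod_R. apply Rabs_pos_eq, pos_INR. Qed.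

Lemma natC_S_neq0 n : natC (S n) <> R2C 0.
Proof.
  intro E. apply (f_equal CM) in E. rewrite Cmod_natC, Cmod_0, S_INR in E.
  pose proof (pos_INR n). lra.
Qed.

Lemma Cmod_Cpow x n : CM (Cpow x n) = CM x ^ n.
Proof.
  induction n as [|n IH]; simpl; [apply Cmod_1|].
  change Cmul with Cmult. now rewrite Cmod_mult, IH.
Qed.

Lemma eventually_Cmod_natC_add_ge (g : C) (M : R) :
  eventually (fun n => M <= CM (natC n + g)%C).
Proof.
  destruct (INR_unbounded (CM g + M)) as [N HN].
  exists N. intros n Hn. apply le_INR in Hn.
  pose proof (Cmod_triangle (natC n + g)%C (- g)%C) as T.
  replace (natC n + g + - g)%C with (natC n + 0)%C in T by ring. rewrite Cplus_0_r in T.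
  rewrite Cmod_opp, Cmod_natC in T. lra.
Qed.

Lemma eventually_natC_add_neq0 (g : C) : eventually (fun n => (natC n + g)%C <> 0%C).
Proof.
  apply (filter_imp (fun n => 1 <= CM (natC n + g)%C));
    [|apply eventually_Cmod_natC_add_ge].
  intros n Hn E. rewrite E, Cmod_0 in Hn. lra.
Qed.

Lemma Cmod_affine_div_quadratic_le (u v a g : C) n :
  a <> 0%C -> 0 < CM (natC n + g)%C ->
  CM ((u * natC n + v) / (a * (natC (S n) * (natC n + g))))%C <=
  (CM u + CM v) / (CM a * CM (natC n + g)%C).
Proof.
  intros Ha Hg.
  assert (Hn : 0 <= INR n) by apply pos_INR.
  assert (Hpa : 0 < CM a) by now apply Cmod_gt_0.
  assert (HS : CM (natC (S n)) = INR n + 1) by now rewrite Cmod_natC, S_INR.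
  assert (Hden : 0 < CM (a * (natC (S n) * (natC n + g)))%C).
  { rewrite !Cmod_mult, HS. apply Rmult_lt_0_compat; [|apply Rmult_lt_0_compat]; lra. }
  assert (Hnum : CM (u * natC n + v)%C <= (CM u + CM v) * (INR n + 1)).
  { eapply Rle_trans; [apply Cmod_triangle|]. rewrite Cmod_mult, Cmod_natC.
    pose proof (Cmod_ge_0 u). pose proof (Cmod_ge_0 v). nra. }
  rewrite Cmod_div; [|intro E; rewrite E, Cmod_0 in Hden; lra].
  apply Rle_div_l; [lra|].
  rewrite !Cmod_mult, HS.
  replace ((CM u + CM v) / (CM a * CM (natC n + g)%C) * (CM a * ((INR n + 1) * CM (natC n + g)%C)))
    with ((CM u + CM v) * (INR n + 1)) by (field; lra).
  exact Hnum.
Qed.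

Lemma eventually_Cmod_affine_div_quadratic_le (u v a g : C) (eta : R) :
  a <> 0%C -> 0 < eta ->
  eventually (fun n => CM ((u * natC n + v) / (a * (natC (S n) * (natC n + g))))%C <= eta).
Proof.
  intros Ha Heta.
  assert (Hpa : 0 < CM a) by now apply Cmod_gt_0.
  assert (HK : 0 <= CM u + CM v) by (pose proof (Cmod_ge_0 u); pose proof (Cmod_ge_0 v); lra).
  set (M := (CM u + CM v) / (CM a * eta) + 1).
  assert (HM : 0 < M).
  { unfold M. enough (0 <= (CM u + CM v) / (CM a * eta)) by lra.
    apply Rdiv_le_0_compat; [lra|]. apply Rmult_lt_0_compat; lra. }
  apply (filter_imp (fun n => M <= CM (natC n + g)%C)); [|apply eventually_Cmod_natC_add_ge].
  intros n Hn.
  eapply Rle_trans; [apply Cmod_affine_div_quadratic_le; [assumption|lra]|].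
  apply Rle_div_l; [apply Rmult_lt_0_compat; lra|].
  assert (E : CM u + CM v = eta * (CM a * ((CM u + CM v) / (CM a * eta)))) by (field; lra).
  unfold M in Hn. rewrite E at 1.
  apply Rmult_le_compat_l; [lra|]. apply Rmult_le_compat_l; lra.
Qed.

Definition heun_den (a ga : C) (n : nat) : C := (a * (natC (S n) * (natC n + ga)))%C.
Definition heun_num_d1 (a q al be ga de : C) (n : nat) : C :=
  ((1 + a) * (natC n * natC n)
   + (ga + heun_eps al be ga de - 1 + a * (ga + de - 1)) * natC n + q)%C.
Definition heun_num_d0 (al be : C) (n : nat) : C := ((natC n - 1 + al) * (natC n - 1 + be))%C.

Lemma heun_d_SS (a q al be ga de : C) m :
  heun_d a q al be ga de (S (S m)) =
  (heun_num_d1 a q al be ga de (S m) / heun_den a ga (S m) * heun_d a q al be ga de (S m)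
   - heun_num_d0 al be (S m) / heun_den a ga (S m) * heun_d a q al be ga de m)%C.
Proof. reflexivity. Qed.

Lemma heun_num_d1_div_den (a q al be ga de : C) n : a <> 0%C -> (natC n + ga)%C <> 0%C ->
  (heun_num_d1 a q al be ga de n / heun_den a ga n =
   (1 + a) / a
   + ((ga + heun_eps al be ga de - 1 + a * (ga + de - 1) - (1 + a) * (1 + ga)) * natC n
      + (q - (1 + a) * ga)) / heun_den a ga n)%C.
Proof.
  intros Ha Hg. pose proof (natC_S_neq0 n) as HS.
  unfold heun_num_d1, heun_den. rewrite natC_S in *. field. now repeat split.
Qed.

Lemma heun_num_d0_div_den (a al be ga : C) n : a <> 0%C -> (natC n + ga)%C <> 0%C ->
  (heun_num_d0 al be n / heun_den a ga n =
   / a + ((al + be - 3 - ga) * natC n + ((al - 1) * (be - 1) - ga)) / heun_den a ga n)%C.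
Proof.
  intros Ha Hg. pose proof (natC_S_neq0 n) as HS.
  unfold heun_num_d0, heun_den. rewrite natC_S in *. field. now repeat split.
Qed.

Lemma eventually_heun_num_d1_div_den_le (a q al be ga de : C) eta : a <> 0%C -> 0 < eta ->
  eventually (fun n =>
    CM (heun_num_d1 a q al be ga de n / heun_den a ga n)%C <= CM ((1 + a) / a)%C + eta).
Proof.
  intros Ha Heta.
  eapply filter_imp; [|apply (filter_and _ _ (eventually_natC_add_neq0 ga)
    (eventually_Cmod_affine_div_quadratic_le
       (ga + heun_eps al be ga de - 1 + a * (ga + de - 1) - (1 + a) * (1 + ga))
       (q - (1 + a) * ga) a ga eta Ha Heta))].
  intros n [Hg Hc]. rewrite heun_num_d1_div_den by assumption.
  eapply Rle_trans; [apply Cmod_triangle|]. apply Rplus_le_compat_l. exact Hc.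
Qed.

Lemma eventually_heun_num_d0_div_den_le (a al be ga : C) eta : a <> 0%C -> 0 < eta ->
  eventually (fun n => CM (heun_num_d0 al be n / heun_den a ga n)%C <= CM (/ a)%C + eta).
Proof.
  intros Ha Heta.
  eapply filter_imp; [|apply (filter_and _ _ (eventually_natC_add_neq0 ga)
    (eventually_Cmod_affine_div_quadratic_le
       (al + be - 3 - ga) ((al - 1) * (be - 1) - ga) a ga eta Ha Heta))].
  intros n [Hg Hc]. rewrite heun_num_d0_div_den by assumption.
  eapply Rle_trans; [apply Cmod_triangle|]. apply Rplus_le_compat_l. exact Hc.
Qed.

Lemma eventually_Cmod_heun_d_SS_le (a q al be ga de : C) eta : a <> 0%C -> 0 < eta ->
  eventually (fun m =>
    CM (heun_d a q al be ga de (S (S m))) <=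
    (CM ((1 + a) / a)%C + eta) * CM (heun_d a q al be ga de (S m))
    + (CM (/ a)%C + eta) * CM (heun_d a q al be ga de m)).
Proof.
  intros Ha Heta.
  destruct (filter_and _ _ (eventually_heun_num_d1_div_den_le a q al be ga de eta Ha Heta)
                           (eventually_heun_num_d0_div_den_le a al be ga eta Ha Heta)) as [N HN].
  exists N. intros m Hm. destruct (HN (S m) ltac:(lia)) as [H1 H0].
  rewrite heun_d_SS. unfold Cminus.
  eapply Rle_trans; [apply Cmod_triangle|]. rewrite Cmod_opp, !Cmod_mult.
  apply Rplus_le_compat; apply Rmult_le_compat_r; auto using Cmod_ge_0.
Qed.

Theorem mainTheorem3 (a q al be ga de x : Cx)
  (ha : a <> Czero)
  (hga : forall k : nat, ga <> RtoC (- INR k))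
  (hx : Cmod (Cmul (Cdiv (Cadd Cone a) a) x) + Cmod (Cmul (Cinv a) (Cpow x 2)) < 1) :
  exists l : R,
    Un_cv (fun N => sum_f_R0 (fun n => Cmod (Cmul (heun_d a q al be ga de n) (Cpow x n))) N) l.
Proof.
  set (r := CM x). set (p := CM ((1 + a) / a)%C). set (s := CM (/ a)%C).
  assert (Hr : 0 <= r) by apply Cmod_ge_0.
  assert (Hp : 0 <= p) by apply Cmod_ge_0.
  assert (Hs : 0 <= s) by apply Cmod_ge_0.
  assert (Hx : p * r + s * r ^ 2 < 1).
  { change (CM (((1 + a) / a) * x)%C + CM (/ a * Cpow x 2)%C < 1) in hx.
    now rewrite !Cmod_mult, Cmod_Cpow in hx. }
  destruct (quadratic_bound_slack p s r Hr Hx) as [eta [Heta Hc]].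
  destruct (eventually_Cmod_heun_d_SS_le a q al be ga de eta ha Heta) as [N0 HN0].
  apply (series_cv_of_linear_recurrence_le _ ((p + eta) * r) ((s + eta) * r ^ 2) N0);
    [intro; apply Cmod_ge_0 | nra | nra | exact Hc |].
  intros m Hm. change Cmul with Cmult. rewrite !Cmod_mult, !Cmod_Cpow. fold r.
  specialize (HN0 m Hm). fold p s in HN0.
  assert (Hrm : 0 <= r ^ 2 * r ^ m) by (apply Rmult_le_pos; apply pow_le; exact Hr).
  replace (r ^ S (S m)) with (r ^ 2 * r ^ m) by (simpl; ring).
  eapply Rle_trans; [apply (Rmult_le_compat_r _ _ _ Hrm HN0)|].
  right. simpl. ring.
Qed.
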